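(* Let $p$ be an odd prime, $G=\langle a,b : (a[b,a])^p,\ b^p\rangle$ and $H=G/\bigcap_{k\ge1}\gamma_k(G)$. Then $H$ is not isomorphic to $C_p*C_p$.
   Context: Commutator convention: $[x,y]=x^{-1}y^{-1}xy$. Lower central series: $\gamma_1(G)=G$, $\gamma_k(G)=[G,\gamma_{k-1}(G)]$. $C_p$ is the cyclic group of order $p$. *)

(* We develop a small theory of (possibly infinite) groups presented as
   setoids: a carrier type with an equivalence relation [geq] that the group
   operations respect.  This lets us form quotient groups and groups given
   by generators and relations without quotient types. *)
From Stdlib Require Import List Setoid Morphisms Relations.
Import ListNotations.

Record Grp := {
  gcar :> Type;
  geq : gcar -> gcar -> Prop;
  gmul : gcar -> gcar -> gcar;
  ginv : gcar -> gcar;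
  gone : gcar;
  geq_equiv : Equivalence geq;
  gmul_proper : Proper (geq ==> geq ==> geq) gmul;
  ginv_proper : Proper (geq ==> geq) ginv;
  gassoc : forall x y z, geq (gmul x (gmul y z)) (gmul (gmul x y) z);
  gone_l : forall x, geq (gmul gone x) x;
  ginv_l : forall x, geq (gmul (ginv x) x) gone }.

Arguments geq {g} _ _.
Arguments gmul {g} _ _.
Arguments ginv {g} _.
Arguments gone {g}.
#[global] Existing Instance geq_equiv.
#[global] Existing Instance gmul_proper.
#[global] Existing Instance ginv_proper.

Module GrpNotation.
Infix "==" := geq (at level 70).
Infix "*" := gmul.
End GrpNotation.
Import GrpNotation.

Section GroupLemmas.
Variable G : Grp.
Implicit Types x y z : G.

Lemma ginv_r x : x * ginv x == gone.
Proof.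
  rewrite <- (gone_l _ (x * ginv x)).
  rewrite <- (ginv_l _ (ginv x)) at 1.
  rewrite <- gassoc. rewrite (gassoc _ (ginv x) x (ginv x)).
  rewrite ginv_l, gone_l. apply ginv_l.
Qed.

Lemma gone_r x : x * gone == x.
Proof. rewrite <- (ginv_l _ x), gassoc, ginv_r. apply gone_l. Qed.

Lemma ginv_uniq x y : x * y == gone -> ginv x == y.
Proof.
  intro H. rewrite <- (gone_r (ginv x)), <- H, gassoc, ginv_l. apply gone_l.
Qed.

Lemma ginv_inv x : ginv (ginv x) == x.
Proof. apply ginv_uniq. apply ginv_l. Qed.

Lemma ginv_mul x y : ginv (x * y) == ginv y * ginv x.
Proof.
  apply ginv_uniq. rewrite gassoc, <- (gassoc _ x y), ginv_r, gone_r.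
  apply ginv_r.
Qed.

Lemma ginv_one : ginv (gone : G) == gone.
Proof. apply ginv_uniq. apply gone_l. Qed.

End GroupLemmas.

Record is_subgroup (G : Grp) (S : G -> Prop) : Prop := {
  sg_resp : forall x y, x == y -> S x -> S y;
  sg_one : S gone;
  sg_mul : forall x y, S x -> S y -> S (x * y);
  sg_inv : forall x, S x -> S (ginv x) }.

Definition conjg {G : Grp} (x g : G) : G := ginv g * x * g.

Definition is_normal (G : Grp) (N : G -> Prop) : Prop :=
  is_subgroup G N /\ forall x g, N x -> N (conjg x g).

Section Quotient.
Variables (G : Grp) (N : G -> Prop) (HN : is_normal G N).

Definition qeq (x y : G) : Prop := N (ginv x * y).

Let Hs := proj1 HN.
Let Hc := proj2 HN.

Lemma qeq_of_geq x y : x == y -> qeq x y.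
Proof.
  intro H. unfold qeq. apply (sg_resp _ _ Hs gone).
  - rewrite H. symmetry. apply ginv_l.
  - apply sg_one, Hs.
Qed.

Lemma qeq_equiv : Equivalence qeq.
Proof.
  split.
  - intro x. apply qeq_of_geq. reflexivity.
  - intros x y H. unfold qeq in *. apply (sg_resp _ _ Hs (ginv (ginv x * y))).
    + rewrite ginv_mul, ginv_inv. reflexivity.
    + apply sg_inv; auto.
  - intros x y z H1 H2. unfold qeq in *.
    apply (sg_resp _ _ Hs ((ginv x * y) * (ginv y * z))).
    + rewrite gassoc, <- (gassoc _ (ginv x)), ginv_r, gone_r. reflexivity.
    + apply sg_mul; auto.
Qed.

Lemma qmul_proper : Proper (qeq ==> qeq ==> qeq) (@gmul G).
Proof.
  intros x x' Hx y y' Hy. unfold qeq in *.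
  apply (sg_resp _ _ Hs (conjg (ginv x * x') y * (ginv y * y'))).
  - unfold conjg. rewrite ginv_mul.
    rewrite <- !gassoc. apply gmul_proper; [reflexivity|].
    rewrite !gassoc. rewrite <- (gassoc _ _ y (ginv y)), ginv_r, gone_r.
    rewrite <- !gassoc. reflexivity.
  - apply sg_mul; auto.
Qed.

Lemma qinv_proper : Proper (qeq ==> qeq) (@ginv G).
Proof.
  intros x x' Hx. unfold qeq in *.
  assert (H1 : N (ginv x' * x)).
  { apply (sg_resp _ _ Hs (ginv (ginv x * x'))).
    - rewrite ginv_mul, ginv_inv. reflexivity.
    - apply sg_inv; auto. }
  apply (sg_resp _ _ Hs (conjg (ginv x' * x) (ginv x))).
  - unfold conjg. rewrite ginv_inv. rewrite <- !gassoc.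
    rewrite ginv_r, gone_r. reflexivity.
  - apply Hc; auto.
Qed.

Definition quot : Grp := {|
  gcar := gcar G;
  geq := qeq;
  gmul := @gmul G;
  ginv := @ginv G;
  gone := @gone G;
  geq_equiv := qeq_equiv;
  gmul_proper := qmul_proper;
  ginv_proper := qinv_proper;
  gassoc := fun x y z => qeq_of_geq _ _ (gassoc G x y z);
  gone_l := fun x => qeq_of_geq _ _ (gone_l G x);
  ginv_l := fun x => qeq_of_geq _ _ (ginv_l G x) |}.

End Quotient.

Definition gen (G : Grp) (S : G -> Prop) (x : G) : Prop :=
  forall T, is_subgroup G T -> (forall y, S y -> T y) -> T x.

Definition commg {G : Grp} (x y : G) : G := ginv x * ginv y * x * y.

(* gamma_k(G) for k >= 1: gamma_1 = G, gamma_k = [G, gamma_(k-1)]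
   (the subgroup generated by the [x,y], x in G, y in gamma_(k-1)).
   [lcs0 G n] is gamma_(n+1)(G). *)
Fixpoint lcs0 (G : Grp) (n : nat) : G -> Prop :=
  match n with
  | O => fun _ => True
  | S n => gen G (fun z => exists x y, lcs0 G n y /\ z == commg x y)
  end.

Definition lcs (G : Grp) (k : nat) : G -> Prop := lcs0 G (Nat.pred k).

Definition lcs_inter (G : Grp) (x : G) : Prop := forall k, 1 <= k -> lcs G k x.

Section LCS.
Variable G : Grp.
Implicit Types x y g : G.

Lemma gen_subgroup S : is_subgroup G (gen G S).
Proof.
  split; unfold gen; intros.
  - exact (sg_resp _ _ H1 x y H (H0 T H1 H2)).
  - apply sg_one; auto.
  - apply sg_mul; [exact H1|apply H; auto|apply H0; auto].
  - apply sg_inv; [exact H0|apply H; auto].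
Qed.

Lemma conjg_mul x y g : conjg (x * y) g == conjg x g * conjg y g.
Proof.
  unfold conjg. rewrite <- !gassoc. apply gmul_proper; [reflexivity|].
  apply gmul_proper; [reflexivity|].
  rewrite (gassoc _ g (ginv g)), ginv_r, gone_l. reflexivity.
Qed.

Lemma conjg_inv x g : conjg (ginv x) g == ginv (conjg x g).
Proof.
  unfold conjg. rewrite !ginv_mul, ginv_inv, gassoc. reflexivity.
Qed.

Lemma conjg_one g : conjg gone g == gone.
Proof. unfold conjg. rewrite gone_r. apply ginv_l. Qed.

#[local] Instance conjg_proper : Proper (geq ==> geq ==> geq) (@conjg G).
Proof. intros a b H c d H'. unfold conjg. rewrite H, H'. reflexivity. Qed.

Lemma conjg_commg x y g : conjg (commg x y) g == commg (conjg x g) (conjg y g).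
Proof. unfold commg. rewrite !conjg_mul, !conjg_inv. reflexivity. Qed.

Lemma gen_conj_closed (S : G -> Prop) :
  (forall x g, S x -> S (conjg x g)) -> forall x g, gen G S x -> gen G S (conjg x g).
Proof.
  intros HS x g Hx T HT HST.
  apply (Hx (fun z => T (conjg z g))).
  - split.
    + intros a b Hab Ha. eapply sg_resp; [exact HT| |exact Ha]. rewrite Hab. reflexivity.
    + apply (sg_resp _ _ HT gone); [symmetry; apply conjg_one|apply sg_one, HT].
    + intros a b Ha Hb. apply (sg_resp _ _ HT _ _ (symmetry (conjg_mul a b g))).
      apply (sg_mul _ _ HT _ _ Ha Hb).
    + intros a Ha. apply (sg_resp _ _ HT _ _ (symmetry (conjg_inv a g))).
      apply (sg_inv _ _ HT _ Ha).
  - intros y Hy. apply HST, HS, Hy.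
Qed.

Lemma lcs0_normal n : is_normal G (lcs0 G n).
Proof.
  induction n as [|n IH]; simpl.
  - split; [split|]; auto.
  - split; [apply gen_subgroup|]. apply gen_conj_closed.
    intros z g (x & y & Hy & Hz). exists (conjg x g), (conjg y g). split.
    + apply (proj2 IH), Hy.
    + rewrite Hz. apply conjg_commg.
Qed.

Lemma lcs_inter_normal : is_normal G (lcs_inter G).
Proof.
  unfold lcs_inter, lcs.
  split; [split|].
  - intros x y H Hx k Hk. exact (sg_resp _ _ (proj1 (lcs0_normal _)) x y H (Hx k Hk)).
  - intros k _. apply sg_one, (proj1 (lcs0_normal _)).
  - intros x y Hx Hy k Hk. exact (sg_mul _ _ (proj1 (lcs0_normal _)) x y (Hx k Hk) (Hy k Hk)).
  - intros x Hx k Hk. exact (sg_inv _ _ (proj1 (lcs0_normal _)) x (Hx k Hk)).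
  - intros x g Hx k Hk. exact (proj2 (lcs0_normal _) x g (Hx k Hk)).
Qed.

End LCS.

Definition resid_quot (G : Grp) : Grp := quot G (lcs_inter G) (lcs_inter_normal G).

Record is_hom (G H : Grp) (f : G -> H) : Prop := {
  hom_proper : forall x y, x == y -> f x == f y;
  hom_mul : forall x y, f (x * y) == f x * f y }.

Definition Isomorphic (G H : Grp) : Prop :=
  exists f : G -> H, is_hom G H f /\
    (forall x y, f x == f y -> x == y) /\ (forall y, exists x, f x == y).

(* a letter is (is_inverse, generator) *)
Definition letter (X : Type) : Type := (bool * X)%type.
Definition word (X : Type) : Type := list (letter X).
Definition linv {X} (l : letter X) : letter X := (negb (fst l), snd l).
Definition winv {X} (w : word X) : word X := rev (map linv w).

Inductive pstep {X} (R : list (word X)) : word X -> word X -> Prop :=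
  | ps_cancel u v l : pstep R (u ++ l :: linv l :: v) (u ++ v)
  | ps_rel u v r : In r R -> pstep R (u ++ r ++ v) (u ++ v).

Definition peq {X} (R : list (word X)) : word X -> word X -> Prop :=
  clos_refl_sym_trans _ (pstep R).

Section Pres.
Variables (X : Type) (R : list (word X)).

Lemma peq_equiv : Equivalence (peq R).
Proof.
  split.
  - intro; apply rst_refl.
  - intros ? ?; apply rst_sym.
  - intros ? ? ?; apply rst_trans.
Qed.

Lemma pstep_ctx a b u u' : pstep R u u' -> pstep R (a ++ u ++ b) (a ++ u' ++ b).
Proof.
  intro H; destruct H.
  - replace (a ++ (u ++ l :: linv l :: v) ++ b) with ((a ++ u) ++ l :: linv l :: (v ++ b))
      by (rewrite <- !app_assoc; reflexivity).
    replace (a ++ (u ++ v) ++ b) with ((a ++ u) ++ (v ++ b))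
      by (rewrite <- !app_assoc; reflexivity).
    apply ps_cancel.
  - replace (a ++ (u ++ r ++ v) ++ b) with ((a ++ u) ++ r ++ (v ++ b))
      by (rewrite <- !app_assoc; reflexivity).
    replace (a ++ (u ++ v) ++ b) with ((a ++ u) ++ (v ++ b))
      by (rewrite <- !app_assoc; reflexivity).
    apply ps_rel; auto.
Qed.

Lemma peq_ctx a b u u' : peq R u u' -> peq R (a ++ u ++ b) (a ++ u' ++ b).
Proof.
  induction 1.
  - apply rst_step, pstep_ctx; auto.
  - apply rst_refl.
  - apply rst_sym; auto.
  - eapply rst_trans; eauto.
Qed.

Lemma papp_proper : Proper (peq R ==> peq R ==> peq R) (@app (letter X)).
Proof.
  intros u u' Hu v v' Hv. apply rst_trans with (u' ++ v).
  - pose proof (peq_ctx [] v _ _ Hu). simpl in H. exact H.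
  - pose proof (peq_ctx u' [] _ _ Hv). rewrite !app_nil_r in H. exact H.
Qed.

Lemma pcancel_r (w : word X) : peq R (w ++ winv w) [].
Proof.
  induction w as [|l w IH]; simpl.
  - apply rst_refl.
  - unfold winv; simpl. fold (winv w).
    apply rst_trans with ([l] ++ [] ++ [linv l]).
    + pose proof (peq_ctx [l] [linv l] _ _ IH). simpl in *.
      rewrite <- app_assoc in H. exact H.
    + apply rst_step. simpl. apply (ps_cancel R [] [] l).
Qed.

Lemma winv_winv (w : word X) : winv (winv w) = w.
Proof.
  unfold winv. rewrite map_rev, rev_involutive, map_map.
  rewrite <- (map_id w) at 2. apply map_ext. intros [b x]; unfold linv; simpl.
  rewrite Bool.negb_involutive. reflexivity.
Qed.

Lemma pcancel_l (w : word X) : peq R (winv w ++ w) [].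
Proof. rewrite <- (winv_winv w) at 2. apply pcancel_r. Qed.

Lemma pinv_proper : Proper (peq R ==> peq R) winv.
Proof.
  intros u u' H.
  apply rst_trans with (winv u ++ u' ++ winv u').
  - apply rst_sym. apply rst_trans with (winv u ++ []).
    + apply papp_proper; [apply rst_refl|apply pcancel_r].
    + rewrite app_nil_r. apply rst_refl.
  - apply rst_trans with (winv u ++ u ++ winv u').
    + apply papp_proper; [apply rst_refl|]. apply papp_proper; [|apply rst_refl].
      apply rst_sym; exact H.
    + rewrite app_assoc. apply rst_trans with ([] ++ winv u').
      * apply papp_proper; [apply pcancel_l|apply rst_refl].
      * apply rst_refl.
Qed.

Definition Pres : Grp := {|
  gcar := word X;
  geq := peq R;
  gmul := @app (letter X);
  ginv := winv;
  gone := [];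
  geq_equiv := peq_equiv;
  gmul_proper := papp_proper;
  ginv_proper := pinv_proper;
  gassoc := fun x y z => eq_ind_r (fun w => peq R w ((x ++ y) ++ z)) (rst_refl _ _ _) (app_assoc x y z) ;
  gone_l := fun x => rst_refl _ _ x;
  ginv_l := pcancel_l |}.

End Pres.

Definition ga : letter bool := (false, true).
Definition gai : letter bool := (true, true).
Definition gb : letter bool := (false, false).
Definition gbi : letter bool := (true, false).

Definition wpow {X} (w : word X) (n : nat) : word X := concat (repeat w n).

(* a [b,a] = a (b^-1 a^-1 b a) *)
Definition w_a_comm_ba : word bool := [ga] ++ [gbi; gai; gb; ga].

Definition Gp (p : nat) : Grp := Pres bool [wpow w_a_comm_ba p; wpow [gb] p].

Definition Hp (p : nat) : Grp := resid_quot (Gp p).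

Definition CpCp (p : nat) : Grp := Pres bool [wpow [ga] p; wpow [gb] p].

From HB Require Import structures.
From mathcomp Require Import all_boot.

Set Implicit Arguments.
Unset Strict Implicit.
Unset Printing Implicit Defensive.

(* Any isomorphism H ~ C_p * C_p, composed with the projection G -> H, is a
   surjection G -> C_p * C_p; we show that every homomorphism from G to C_p * C_p
   has abelian image.  Compute in C_p * C_p with normal forms.  A cyclically
   reduced element whose first and last syllables lie in different factors has
   infinite order, so every torsion element is conjugate to a syllable.  Let x, y
   be the images of a, b; since y has finite order we may take y = s a syllable
   of one factor.  Peeling the syllables of that factor off both ends of x and
   conjugating them away (they commute with s), one finds that x [s, x] has
   finite order only if x lies in the factor of s, i.e. commutes with y.  Oddness
   of p enters once: a nontrivial syllable t has t^2 <> 1. *)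

Lemma modn_double_neq0 m e : odd m -> e %% m != 0 -> (e + e) %% m != 0.
Proof.
move=> m_odd; apply: contra; rewrite -!/(dvdn m _) addnn -mul2n.
by rewrite Gauss_dvdr // coprime_sym coprime2n.
Qed.

Section GroupFacts.

Variable G : groupType.
Implicit Types x y z : G.
Local Open Scope group_scope.

Lemma conjg_torsion x g n : x ^+ n = 1 -> (x ^ g) ^+ n = 1.
Proof. by move=> xn; rewrite -conjXg xn conj1g. Qed.

Lemma commgM_commutel x y z : commute x y -> [~ x, y * z] = [~ x, z].
Proof. by move=> xy; rewrite /commg /conjg invgM -!mulgA (mulgA x) xy -mulgA mulKg. Qed.

Lemma commgM_commuter x y z : commute x z -> [~ x, y * z] = [~ x, y] ^ z.
Proof.
move=> xz; have xzV : commute x^-1 z^-1 by apply/commuteV/commute_sym/commuteV.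
by rewrite /commg /conjg invgM -!mulgA [x^-1 * (z^-1 * _)]mulgA xzV -!mulgA.
Qed.

End GroupFacts.

Section WordEvaluation.

Variable G : groupType.
Local Open Scope group_scope.
Implicit Types (x y : G) (u v w r : word bool).

Definition eval_letter x y (l : letter bool) : G :=
  let g := if l.2 then x else y in if l.1 then g^-1 else g.

Definition eval_word x y w : G := \prod_(l <- w) eval_letter x y l.

Lemma eval_letter_linv x y l : eval_letter x y l * eval_letter x y (linv l) = 1.
Proof. by case: l => [[] []]; rewrite /eval_letter /= ?mulVg ?mulgV. Qed.

Lemma eval_word_seq1 x y l : eval_word x y [:: l] = eval_letter x y l.
Proof. exact: big_seq1. Qed.

Lemma eval_word_cons x y l w :
  eval_word x y (l :: w) = eval_letter x y l * eval_word x y w.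
Proof. exact: big_cons. Qed.

Lemma eval_word_cat x y u v : eval_word x y (u ++ v) = eval_word x y u * eval_word x y v.
Proof. exact: big_cat. Qed.

Lemma eval_word_wpow x y w n : eval_word x y (wpow w n) = eval_word x y w ^+ n.
Proof.
elim: n => [|n IH]; first by rewrite /eval_word big_nil.
by rewrite expgS -IH -eval_word_cat.
Qed.

Lemma eval_word_peq x y R u v : (forall r, List.In r R -> eval_word x y r = 1) ->
  peq R u v -> eval_word x y u = eval_word x y v.
Proof.
move=> Rx; elim=> {u v} [u v [u' v' l | u' v' r /Rx r1] | // | // | u v w _ -> _ -> //].
  rewrite !eval_word_cat; congr (_ * _).
  by rewrite !eval_word_cons mulgA eval_letter_linv mul1g.
by rewrite !eval_word_cat r1 mul1g.
Qed.

Lemma eval_word_commute x y u v :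
  commute x y -> commute (eval_word x y u) (eval_word x y v).
Proof.
move=> xy; have cl l l' : commute (eval_letter x y l) (eval_letter x y l').
  have yx := commute_sym xy.
  by case: l l' => [[] []] [[] []]; rewrite /eval_letter /=;
    do ?[apply/commute_sym/commuteV | apply: commuteV].
by apply: commute_prod => l _; apply/commute_sym/commute_prod => l' _; apply: cl.
Qed.

Lemma eval_w_a_comm_ba x y : eval_word x y w_a_comm_ba = x * [~ y, x].
Proof. by rewrite /eval_word !big_cons big_nil mulg1. Qed.

Variables (R : list (word bool)) (F : word bool -> G).
Hypothesis F_peq : forall u v, peq R u v -> F u = F v.
Hypothesis F_cat : forall u v, F (u ++ v) = F u * F v.

Lemma word_map_nil : F [::] = 1.
Proof. by apply: (@mulIg _ (F [::])); rewrite mul1g -F_cat. Qed.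

Lemma word_map_rel r : List.In r R -> F r = 1.
Proof.
move=> Rr; have := F_peq (Relation_Operators.rst_step _ _ _ _ (ps_rel R [::] [::] r Rr)).
by rewrite /= List.app_nil_r word_map_nil.
Qed.

Lemma word_map_eval w : F w = eval_word (F [:: ga]) (F [:: gb]) w.
Proof.
have Finv b : F [:: (true, b)] = (F [:: (false, b)])^-1.
  apply/esym/mulg1_eq; rewrite -F_cat -word_map_nil; apply: F_peq.
  exact: Relation_Operators.rst_step (ps_cancel _ [::] [::] (false, b)).
elim: w => [|l w IH]; first by rewrite word_map_nil /eval_word big_nil.
rewrite -cat1s F_cat IH eval_word_cons.
by case: l => [[] []]; rewrite ?Finv.
Qed.

End WordEvaluation.

(* A syllable (c, e) stands for g_c ^ e, where g_true and g_false generate the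
   two factors; [freeCp q] is C_p * C_p for p = q.+1, its elements being the
   [reduced] sequences of syllables. *)
Definition syllable := (bool * nat)%type.

Section NormalForms.

Variable q : nat.
Local Notation p := q.+1.
Implicit Types (c : bool) (e : nat) (s : syllable) (u v w : seq syllable).

Definition reduced w :=
  all (fun s => 0 < s.2 < p) w && sorted (fun s t : syllable => s.1 != t.1) w.

Definition head_neq c w := if w is t :: _ then c != t.1 else true.

Definition cons_syl c e w := if e %% p == 0 then w else (c, e %% p) :: w.

Definition lmul_syl s w :=
  if w is t :: w' then
    if s.1 == t.1 then cons_syl s.1 (s.2 + t.2) w' else cons_syl s.1 s.2 w
  else cons_syl s.1 s.2 w.

Definition nf_mul u v := foldr lmul_syl v u.

Definition nf_inv u := rev (map (fun s => (s.1, p - s.2)) u).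

Lemma reduced_cons s w :
  reduced (s :: w) = [&& 0 < s.2 < p, head_neq s.1 w & reduced w].
Proof.
rewrite /reduced /=; case: w => [|t w] /=; first by rewrite !andbT.
by rewrite -!andbA; do !bool_congr.
Qed.

Lemma reduced_catE s u t v : reduced (s :: u ++ t :: v) =
  [&& reduced (s :: u), reduced (t :: v) & (last s u).1 != t.1].
Proof.
rewrite /reduced /= all_cat /= cat_path /= -!andbA.
by do !bool_congr.
Qed.

Lemma cons_syl_modE c e1 e2 w : e1 = e2 %[mod p] -> cons_syl c e1 w = cons_syl c e2 w.
Proof. by rewrite /cons_syl => ->. Qed.

Lemma cons_syl_small c e w : 0 < e < p -> cons_syl c e w = (c, e) :: w.
Proof. by case/andP=> e0 ep; rewrite /cons_syl modn_small // (gtn_eqF e0). Qed.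

Lemma small_modn_neq0 e : 0 < e < p -> e %% p != 0.
Proof. by case/andP=> e0 ep; rewrite modn_small // -lt0n. Qed.

Lemma reduced_cons_syl c e w : head_neq c w -> reduced w -> reduced (cons_syl c e w).
Proof.
rewrite /cons_syl; case: eqP => // /eqP e_ne0 hw rw.
by rewrite reduced_cons /= lt0n e_ne0 ltn_pmod // hw rw.
Qed.

Lemma lmul_syl_mod c e1 e2 w :
  e1 = e2 %[mod p] -> lmul_syl (c, e1) w = lmul_syl (c, e2) w.
Proof.
move=> e12; case: w => [|t w] /=; first exact: cons_syl_modE.
by case: ifP => _; apply: cons_syl_modE => //; rewrite -modnDml e12 modnDml.
Qed.

Lemma lmul_syl_reduced s w : reduced w -> reduced (lmul_syl s w).
Proof.
case: w => [|t w] /= rw; first exact: reduced_cons_syl.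
move: (rw); rewrite reduced_cons => /and3P[_ htw rw'].
case: eqVneq => [-> | ne]; apply: reduced_cons_syl => //.
Qed.

Lemma size_cons_syl c e w : size (cons_syl c e w) <= (size w).+1.
Proof. by rewrite /cons_syl; case: ifP. Qed.

Lemma size_lmul_syl s w : size (lmul_syl s w) <= (size w).+1.
Proof.
case: w => [|t w] /=; first exact: size_cons_syl.
by case: ifP => _; rewrite ?size_cons_syl // (leq_trans (size_cons_syl _ _ _)).
Qed.

Lemma size_nf_mul u v : size (nf_mul u v) <= size u + size v.
Proof. by elim: u => //= s u IH; rewrite (leq_trans (size_lmul_syl _ _)). Qed.

Lemma lmul_syl_head_neq s w : head_neq s.1 w -> lmul_syl s w = cons_syl s.1 s.2 w.
Proof. by case: w => //= t w /negbTE ->. Qed.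

Lemma lmul_syl0 c e w : e %% p = 0 -> reduced w -> lmul_syl (c, e) w = w.
Proof.
move=> e0; rewrite (@lmul_syl_mod _ _ 0) ?mod0n //.
case: w => [|t w] //=; rewrite reduced_cons => /andP[t_small _].
case: ifP => [/eqP -> | _]; last by rewrite /cons_syl mod0n.
by rewrite add0n cons_syl_small // -surjective_pairing.
Qed.

Lemma lmul_syl_cons_syl c a b w : head_neq c w -> reduced w ->
  lmul_syl (c, a) (cons_syl c b w) = cons_syl c (a + b) w.
Proof.
move=> hw rw; rewrite {1}/cons_syl; case: eqP => [b0 | _].
  by rewrite lmul_syl_head_neq //; apply: cons_syl_modE; rewrite -modnDmr b0 addn0.
by rewrite /= eqxx; apply: cons_syl_modE; rewrite modnDmr.
Qed.

Lemma lmul_sylD c a b w : reduced w ->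
  lmul_syl (c, a) (lmul_syl (c, b) w) = lmul_syl (c, a + b) w.
Proof.
case: w => [|t w] rw /=; first exact: lmul_syl_cons_syl.
case: eqVneq => [ct | nct]; last by rewrite lmul_syl_cons_syl.
move: rw; rewrite reduced_cons -ct => /and3P[_ hw rw].
by rewrite lmul_syl_cons_syl // addnA.
Qed.

Lemma nf_mul_reduced u v : reduced v -> reduced (nf_mul u v).
Proof. by move=> rv; elim: u => //= s u; apply: lmul_syl_reduced. Qed.

Lemma nf_mul_cons_syl c e w v : reduced v ->
  nf_mul (cons_syl c e w) v = lmul_syl (c, e) (nf_mul w v).
Proof.
move=> rv; rewrite /cons_syl; case: eqP => [e0 | _] /=.
  by rewrite lmul_syl0 // nf_mul_reduced.
by apply: lmul_syl_mod; rewrite modn_mod.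
Qed.

Lemma nf_mul_lmul_syl s w v : reduced v ->
  nf_mul (lmul_syl s w) v = lmul_syl s (nf_mul w v).
Proof.
case: s => c e rv; case: w => [|t w] /=; first exact: nf_mul_cons_syl.
case: eqVneq => [ct | _]; rewrite nf_mul_cons_syl //=.
by rewrite -lmul_sylD ?nf_mul_reduced // ct -surjective_pairing.
Qed.

Lemma nf_mulA u w v : reduced v -> nf_mul (nf_mul u w) v = nf_mul u (nf_mul w v).
Proof. by move=> rv; elim: u => //= s u IH; rewrite nf_mul_lmul_syl // IH. Qed.

Lemma nf_mul_nil u : reduced u -> nf_mul u [::] = u.
Proof.
elim: u => //= s u IH; rewrite reduced_cons => /and3P[s_small hu ru].
by rewrite IH // lmul_syl_head_neq // cons_syl_small // -surjective_pairing.
Qed.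

Lemma nf_inv_reduced u : reduced u -> reduced (nf_inv u).
Proof.
rewrite /reduced /nf_inv all_rev rev_sorted sorted_map all_map => /andP[ha hs].
apply/andP; split.
  apply/allP => s /(allP ha) /= /andP[s0 sp].
  by rewrite subn_gt0 sp -subn_gt0 subKn // ltnW.
case: u hs {ha} => //= s u; apply: sub_path => x y /=; by rewrite eq_sym.
Qed.

Lemma nf_mulVs u : reduced u -> nf_mul (nf_inv u) u = [::].
Proof.
elim: u => //= s u IH; rewrite reduced_cons => /and3P[/andP[s0 sp] hu ru].
rewrite /nf_inv /= rev_cons -/(nf_inv u) /nf_mul foldr_rcons /= eqxx.
rewrite /cons_syl subnK ?modnn ?eqxx; last exact: ltnW.
exact: IH.
Qed.

Lemma nf_invK u : reduced u -> nf_inv (nf_inv u) = u.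
Proof.
rewrite /nf_inv map_rev revK -map_comp /reduced => /andP[ha _].
rewrite -[RHS]map_id; apply/eq_in_map => -[c e] /(allP ha) /= /andP[e0 ep].
by rewrite subKn // ltnW.
Qed.

Lemma nf_mulsV u : reduced u -> nf_mul u (nf_inv u) = [::].
Proof. by move=> ru; rewrite -{1}(nf_invK ru) nf_mulVs // nf_inv_reduced. Qed.

End NormalForms.

Definition freeCp q := {w | reduced q w}.
HB.instance Definition _ q := Choice.on (freeCp q).

Section FreeCpGroup.

Variable q : nat.
Implicit Types x y z : freeCp q.

Definition fc_one : freeCp q := exist _ [::] isT.
Definition fc_mul x y : freeCp q :=
  exist _ (nf_mul q (val x) (val y)) (nf_mul_reduced (val x) (valP y)).
Definition fc_inv x : freeCp q := exist _ (nf_inv q (val x)) (nf_inv_reduced (valP x)).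

Lemma fc_mulA : associative fc_mul.
Proof. by move=> x y z; apply: val_inj; rewrite /= nf_mulA // valP. Qed.

Lemma fc_mul1g : left_id fc_one fc_mul.
Proof. by move=> x; apply: val_inj. Qed.

Lemma fc_mulg1 : right_id fc_one fc_mul.
Proof. by move=> x; apply: val_inj; rewrite /= nf_mul_nil // valP. Qed.

Lemma fc_mulVg : left_inverse fc_one fc_inv fc_mul.
Proof. by move=> x; apply: val_inj; rewrite /= nf_mulVs // valP. Qed.

Lemma fc_mulgV : right_inverse fc_one fc_inv fc_mul.
Proof. by move=> x; apply: val_inj; rewrite /= nf_mulsV // valP. Qed.

End FreeCpGroup.

HB.instance Definition _ q := isGroup.Build (freeCp q)
  (@fc_mulA q) (@fc_mul1g q) (@fc_mulg1 q) (@fc_mulVg q) (@fc_mulgV q).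

Section Syllables.

Variable q : nat.
Local Notation p := q.+1.
Local Notation freeCp := (freeCp q).
Local Open Scope group_scope.
Implicit Types (a b c : bool) (e : nat) (x y z : freeCp).

Definition syl c e : freeCp :=
  exist _ (cons_syl q c e [::]) (@reduced_cons_syl q c e [::] isT isT).

Definition len x := size (val x).

(* With b = ~~ a, [ends_in x a b] says x is cyclically reduced: consecutive
   copies of x concatenate without cancellation. *)
Definition ends_in x a b :=
  if val x is s :: w then (s.1 == a) && ((last s w).1 == b) else false.

Lemma val_mul x y : val (x * y) = nf_mul q (val x) (val y).
Proof. by []. Qed.

Lemma val_syl c e : 0 < e < p -> val (syl c e) = [:: (c, e)].
Proof. exact: cons_syl_small. Qed.

Lemma sylD c e1 e2 : syl c e1 * syl c e2 = syl c (e1 + e2).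
Proof.
by apply: val_inj; rewrite /= nf_mul_cons_syl ?lmul_syl_cons_syl // reduced_cons_syl.
Qed.

Lemma syl0 c e : e %% p = 0 -> syl c e = 1.
Proof. by move=> e0; apply: val_inj; rewrite /= /cons_syl e0. Qed.

Lemma syl_expg c e n : syl c e ^+ n = syl c (e * n)%N.
Proof.
elim: n => [|n IH]; first by rewrite muln0 [RHS]syl0.
by rewrite expgS IH sylD mulnS.
Qed.

Lemma commute_syl c e1 e2 : commute (syl c e1) (syl c e2).
Proof. by rewrite /commute !sylD addnC. Qed.

Lemma ends_in_syl c e : e %% p != 0 -> ends_in (syl c e) c c.
Proof. by rewrite /ends_in /= /cons_syl => /negbTE ->; rewrite /= eqxx. Qed.

Lemma nf_mul_cat u v : reduced q (u ++ v) -> nf_mul q u v = u ++ v.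
Proof.
elim: u => //= s u IH; rewrite reduced_cons => /and3P[s_small hu ruv].
rewrite IH // lmul_syl_head_neq; first by rewrite cons_syl_small // -surjective_pairing.
by case: u hu {IH ruv} => //; case: v.
Qed.

Lemma ends_in_mulE x y a b b' c : ends_in x a b -> ends_in y b' c -> b' = ~~ b ->
  val (x * y) = val x ++ val y.
Proof.
case: x y => [[|s u] rx] [[|t v] ry] // /andP[_ /eqP lb] /andP[/eqP tb _] bb'.
apply: nf_mul_cat; rewrite /= reduced_catE rx ry lb tb bb'.
by case: (b).
Qed.

Lemma ends_in_mul x y a b b' c : ends_in x a b -> ends_in y b' c -> b' = ~~ b ->
  ends_in (x * y) a c.
Proof.
move=> ex ey bb'; rewrite /ends_in (ends_in_mulE ex ey bb').
case: x y ex ey => [[|s u] rx] [[|t v] ry] //= /andP[sa _] /andP[_ lc].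
by rewrite sa last_cat.
Qed.

Lemma ends_inV x a b : ends_in x a b -> ends_in x^-1 b a.
Proof.
case: x => [[|s u] rx] //=; rewrite /ends_in /= /nf_inv /= rev_cons.
case/lastP: u {rx} => [|u t] /=; first by rewrite andbC.
by rewrite map_rcons rev_rcons last_rcons /= last_rcons andbC.
Qed.

Lemma ends_in_neq1 x a b : ends_in x a b -> x != 1.
Proof. by case: x => [[|s u] rx] //; apply: contraTneq => ->. Qed.

Lemma ends_in_expg z a n : ends_in z a (~~ a) -> ends_in (z ^+ n.+1) a (~~ a).
Proof.
move=> ez; elim: n => [|n IH] //; rewrite expgS.
by apply: ends_in_mul ez IH _; rewrite negbK.
Qed.

Lemma ends_in_expg_neq1 z a n : ends_in z a (~~ a) -> z ^+ n.+1 != 1.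
Proof. by move=> ez; apply: ends_in_neq1 (ends_in_expg n ez). Qed.

Lemma ends_inP x : x != 1 -> exists a b, ends_in x a b.
Proof.
case: x => [[|s u] rx] ne; first by case/eqP: ne; apply: val_inj.
by exists s.1, (last s u).1; rewrite /ends_in /= !eqxx.
Qed.

Lemma len_mul_syl x c e : len (x * syl c e) <= (len x).+1.
Proof.
rewrite /len val_mul (leq_trans (size_nf_mul _ _ _)) //.
by rewrite -addn1 leq_add2l size_cons_syl.
Qed.

Lemma peel_factor c x :
  [\/ x = 1,
      exists i x1, x = syl c i * x1 /\ len x1 < len x,
      exists x1 k, x = x1 * syl c k /\ len x1 < len x
    | ends_in x (~~ c) (~~ c)].
Proof.
case: x => [[|s u] rx]; first by constructor 1; apply: val_inj.
have [sc | nsc] := eqVneq s.1 c.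
  have := rx; rewrite reduced_cons => /and3P[s_small _ ru].
  constructor 2; exists s.2, (exist _ u ru); split => //.
  by apply: val_inj; rewrite /= cons_syl_small // nf_mul_cat //= -sc -surjective_pairing.
case/lastP: u rx => [|u t] rx.
  by constructor 4; rewrite /ends_in /=; case: (s.1) c nsc => [] [].
have := rx; rewrite -{1}cats1 reduced_catE => /and3P[rsu rt _].
have [tc | ntc] := eqVneq t.1 c.
  constructor 3; exists (exist _ (s :: u) rsu), t.2; split; last first.
    by rewrite /len /= size_rcons.
  have t_small : 0 < t.2 < p by move: rt; rewrite reduced_cons => /andP[].
  apply: val_inj; rewrite val_mul val_syl // nf_mul_cat -tc -surjective_pairing.
    by rewrite cats1.
  by rewrite /= cats1.
constructor 4; rewrite /ends_in /= last_rcons.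
by case: (s.1) (t.1) c nsc ntc => [] [] [].
Qed.

Lemma split_ends z a : ends_in z a a ->
  (exists2 e, e %% p != 0 & z = syl a e) \/
  exists e1 e2 C, [/\ e1 %% p != 0, e2 %% p != 0, ends_in C (~~ a) (~~ a),
     z = syl a e1 * C * syl a e2 & (len C).+1 < len z].
Proof.
case: z => [[|[c e1] u] rz] // /andP[/eqP /= ca la]; subst c.
have e1_small : 0 < e1 < p by move: rz; rewrite reduced_cons => /andP[].
have e1_nz := small_modn_neq0 e1_small.
case/lastP: u rz la => [|m [c e2]] rz /=; rewrite ?last_rcons /= => /eqP ca.
  by left; exists e1 => //; apply: val_inj; rewrite val_syl.
subst c; case: m rz => [|t m] rz.
  by exfalso; move: rz; rewrite reduced_cons /= eqxx !andbF.
have : reduced q ((a, e1) :: [::] ++ t :: m ++ [:: (a, e2)]) by rewrite cats1; exact: rz.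
rewrite reduced_catE reduced_catE => /and3P[_ /and3P[rC re2 lt] at_].
have e2_small : 0 < e2 < p by move: re2; rewrite reduced_cons => /andP[].
have e2_nz := small_modn_neq0 e2_small.
set C : freeCp := exist _ (t :: m) rC.
have eC : ends_in C (~~ a) (~~ a).
  by rewrite /ends_in /=; move: at_ lt; case: (t.1) (last t m).1 (a) => [] [] [].
right; exists e1, e2, C; split => //; last by rewrite /len /= size_rcons.
have e1C : ends_in (syl a e1 * C) a (~~ a).
  by apply: ends_in_mul (ends_in_syl _ e1_nz) eC _.
apply: val_inj; rewrite (ends_in_mulE e1C (ends_in_syl _ e2_nz)) ?negbK //.
by rewrite (ends_in_mulE (ends_in_syl _ e1_nz) eC) // !val_syl //= cats1.
Qed.

Lemma syl_noncommute : 0 < q -> ~ commute (syl true 1) (syl false 1).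
Proof.
move=> q_gt0 /(congr1 val).
have one_nz : 1 %% q.+1 != 0 by rewrite modn_small.
rewrite (ends_in_mulE (ends_in_syl true one_nz) (ends_in_syl false one_nz)) //.
rewrite (ends_in_mulE (ends_in_syl false one_nz) (ends_in_syl true one_nz)) //.
by rewrite !val_syl.
Qed.

End Syllables.

Ltac ends_in_prod :=
  match goal with
  | |- is_true (ends_in (_ * _)%g _ _) =>
      eapply ends_in_mul; [ends_in_prod | ends_in_prod | by rewrite ?negbK]
  | |- is_true (ends_in (_ ^-1)%g _ _) => apply: ends_inV; ends_in_prod
  | |- _ => eassumption
  end.

Section Torsion.

Variable q : nat.
Local Notation p := q.+1.
Local Notation freeCp := (freeCp q).
Local Notation syl := (@syl q).
Local Open Scope group_scope.
Implicit Types (a b c : bool) (e : nat) (x y z g B C rho : freeCp).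

(* Conjugating by its first syllable shortens z unless z is cyclically reduced,
   in which case z has infinite order. *)
Lemma torsion_conj_syl z n : z ^+ n.+1 = 1 -> exists g c e, z = syl c e ^ g.
Proof.
move: {2}(len z).+1 (ltnSn (len z)) => N; elim: N z => // N IH z zN zn.
have [-> | /ends_inP[a [b ez]]] := eqVneq z 1.
  by exists 1, true, 0; rewrite syl0 // conjg1.
have [ba | nba] := eqVneq b a; last first.
  have ez' : ends_in z a (~~ a) by case: (a) (b) nba ez => [] [].
  by case/eqP: (ends_in_expg_neq1 n ez').
subst b; case: (split_ends ez) => [[e _ ->] | [e1 [e2 [C [_ _ _ dz lenC]]]]].
  by exists 1, a, e; rewrite conjg1.
set s := syl a e1.
have zs : z ^ s = C * syl a (e2 + e1) by rewrite conjgE dz -!mulgA mulKg sylD.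
have [g [c [e ez's]]] : exists g c e, z ^ s = syl c e ^ g.
  apply: IH; last exact: conjg_torsion.
  by rewrite zs (leq_ltn_trans (len_mul_syl _ _ _)) // (leq_trans lenC).
by exists (g * s^-1), c, e; rewrite conjgM -ez's conjgK.
Qed.

(* Conjugate by the first syllable s of B.  If the last syllable of B is not
   s^-1 the result is cyclically reduced; otherwise it has the same shape with
   the shorter middle part of B and rho ^ s in place of B and rho. *)
Lemma mul_commg_not_torsion B rho a n : odd p ->
  ends_in B (~~ a) (~~ a) -> ends_in rho a a -> (B * [~ rho, B]) ^+ n.+1 != 1.
Proof.
move=> p_odd; move: {2}(len B).+1 (ltnSn (len B)) => N.
elim: N B rho a => // N IH B rho a BN eB erho.
case: (split_ends eB) => [[e e_nz dB] | [e1 [e2 [C [e1_nz e2_nz eC dB lenC]]]]].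
  set s := syl (~~ a) e; rewrite -(conjg_eq1 _ s) conjXg.
  have -> : (B * [~ rho, B]) ^ s = rho^-1 * s^-1 * rho * syl (~~ a) (e + e).
    by rewrite dB conjgE /commg conjgE -!mulgA mulKg sylD.
  have es : ends_in s (~~ a) (~~ a) by apply: ends_in_syl.
  have ess : ends_in (syl (~~ a) (e + e)) (~~ a) (~~ a).
    by apply/ends_in_syl/modn_double_neq0.
  by apply: ends_in_expg_neq1; ends_in_prod.
have lenCN : len C < N by rewrite -ltnS (leq_trans _ BN) // ltnW.
set s := syl (~~ a) e1 in dB *; set t := syl (~~ a) e2 in dB *.
have es : ends_in s (~~ a) (~~ a) by apply: ends_in_syl.
have et : ends_in t (~~ a) (~~ a) by apply: ends_in_syl.
rewrite -(conjg_eq1 _ s) conjXg.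
have [ts_z | ts_nz] := eqVneq ((e2 + e1) %% p) 0.
  have ts : t = s^-1 by apply/esym/mulg1_eq; rewrite /s /t sylD syl0 // addnC.
  rewrite ts in dB.
  have -> : (B * [~ rho, B]) ^ s = C * [~ rho ^ s, C].
    rewrite dB /commg !conjgE !invgM !invgK -!mulgA.
    by rewrite !(mulKg, mulVKg, mulVg, mulgV, mulg1).
  apply: (IH C (rho ^ s) (~~ a)) => //; rewrite conjgE; ends_in_prod.
have ets : ends_in (syl (~~ a) (e2 + e1)) (~~ a) (~~ a) by apply: ends_in_syl.
rewrite negbK in eC.
have -> : (B * [~ rho, B]) ^ s =
    C * t * rho^-1 * t^-1 * C^-1 * s^-1 * rho * s * C * syl (~~ a) (e2 + e1).
  rewrite -sylD dB /commg !conjgE !invgM -!mulgA.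
  by rewrite !(mulKg, mulVKg, mulVg, mulgV, mulg1).
by apply: ends_in_expg_neq1; ends_in_prod.
Qed.

(* Syllables of the factor c at the ends of x commute with syl c e and are
   conjugated away; once x has no such end, either m is trivial and
   mul_commg_not_torsion applies, or the element is cyclically reduced. *)
Lemma mul_commg_syl_torsion x c e m n : odd p -> e %% p != 0 ->
  (x * [~ syl c e, x] * syl c m) ^+ n.+1 = 1 -> exists j, x = syl c j.
Proof.
move=> p_odd e_nz; move: {2}(len x).+1 (ltnSn (len x)) => N.
elim: N x m => // N IH x m xN.
set r := syl c e; have er : ends_in r c c by apply: ends_in_syl.
case: (peel_factor c x) => [-> | [i [x1 [dx lenx1]]] | [x1 [k [dx lenx1]]] | ex] tx.
- by exists 0; rewrite syl0.
- have x1N : len x1 < N by rewrite -ltnS (leq_trans _ xN).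
  have [j x1j] : exists j, x1 = syl c j.
    apply: (IH x1 (m + i) x1N); rewrite -sylD.
    have <- : (x * [~ r, x] * syl c m) ^ syl c i = x1 * [~ r, x1] * (syl c m * syl c i).
      by rewrite dx (commgM_commutel _ (commute_syl _ c e i)) conjgE -!mulgA mulKg.
    exact: conjg_torsion.
  by exists (i + j); rewrite dx x1j sylD.
- have x1N : len x1 < N by rewrite -ltnS (leq_trans _ xN).
  have [j x1j] : exists j, x1 = syl c j.
    apply: (IH x1 (k + m) x1N); rewrite -sylD.
    suff <- : x * [~ r, x] * syl c m = x1 * [~ r, x1] * (syl c k * syl c m) by [].
    by rewrite dx (commgM_commuter _ (commute_syl _ c e k)) conjgE -!mulgA mulVKg.
  by exists (j + k); rewrite dx x1j sylD.
- have [m0 | m_nz] := eqVneq (m %% p) 0.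
    rewrite syl0 // mulg1 in tx.
    by case/eqP: (mul_commg_not_torsion n p_odd ex er).
  have em : ends_in (syl c m) c c by apply: ends_in_syl.
  have exc : ends_in (x * [~ r, x] * syl c m) (~~ c) (~~ ~~ c).
    by rewrite negbK /commg /conjg; ends_in_prod.
  by case/eqP: (ends_in_expg_neq1 n exc).
Qed.

Lemma torsion_mul_commg_commute x y m n : odd p ->
  y ^+ m.+1 = 1 -> (x * [~ y, x]) ^+ n.+1 = 1 -> commute x y.
Proof.
move=> p_odd /torsion_conj_syl[g [c [e ->]]] tx.
have [e0 | e_nz] := eqVneq (e %% p) 0; first by rewrite syl0 // conj1g; apply: commute1.
set x' := x ^ g^-1.
have x'g : x = x' ^ g by rewrite conjgKV.
have [j x'j] : exists j, x' = syl c j.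
  apply: (mul_commg_syl_torsion (m := 0) (n := n) p_odd e_nz).
  rewrite (@syl0 _ c 0) // mulg1.
  have -> : x' * [~ syl c e, x'] = (x * [~ syl c e ^ g, x]) ^ g^-1.
    by rewrite conjMg conjRg conjgK.
  exact: conjg_torsion.
by rewrite /commute x'g x'j -!conjMg commute_syl.
Qed.

End Torsion.

Section GpHomomorphisms.

Variables (q n : nat) (F : word bool -> freeCp q).
Local Open Scope group_scope.
Hypothesis p_odd : odd q.+1.
Hypothesis n_gt0 : 0 < n.
Hypothesis F_peq :
  forall u v, peq [:: wpow w_a_comm_ba n; wpow [:: gb] n] u v -> F u = F v.
Hypothesis F_cat : forall u v, F (u ++ v) = F u * F v.

Lemma Gp_hom_image_commute u v : commute (F u) (F v).
Proof.
set x := F [:: ga]; set y := F [:: gb].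
have rel r : List.In r [:: wpow w_a_comm_ba n; wpow [:: gb] n] -> eval_word x y r = 1.
  by move=> Rr; rewrite -(word_map_eval F_peq F_cat) (word_map_rel F_peq F_cat Rr).
have yn : y ^+ n = 1.
  by have := rel _ (or_intror (or_introl erefl)); rewrite eval_word_wpow eval_word_seq1.
have wn : (x * [~ y, x]) ^+ n = 1.
  by have := rel _ (or_introl erefl); rewrite eval_word_wpow eval_w_a_comm_ba.
have xy : commute x y.
  by apply: (torsion_mul_commg_commute (m := n.-1) (n := n.-1) p_odd); rewrite prednK.
rewrite (word_map_eval F_peq F_cat u) (word_map_eval F_peq F_cat v).
exact: eval_word_commute.
Qed.

End GpHomomorphisms.

Theorem mainTheorem15 (p : nat) (hp : prime p) (hodd : odd p) :
  ~ Isomorphic (Hp p) (CpCp p).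
Proof.
case: p hp hodd => [//|q] hp hodd [f [f_hom [_ f_onto]]].
pose a := syl q true 1; pose b := syl q false 1.
have ab_rel r :
    List.In r [:: wpow [:: ga] q.+1; wpow [:: gb] q.+1] -> eval_word a b r = 1%g.
  case=> [<- | [<- | []]]; rewrite eval_word_wpow eval_word_seq1 syl_expg mul1n;
    exact: syl0 (modnn _).
pose F u := eval_word a b (f u).
have F_peq u v : peq [:: wpow w_a_comm_ba q.+1; wpow [:: gb] q.+1] u v -> F u = F v.
  move=> uv; apply: (eval_word_peq ab_rel); apply: (hom_proper _ _ _ f_hom).
  exact: (qeq_of_geq (Gp q.+1) _ (lcs_inter_normal _) u v uv).
have F_cat u v : F (u ++ v) = (F u * F v)%g.
  rewrite -eval_word_cat; apply: (eval_word_peq ab_rel).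
  exact: (hom_mul _ _ _ f_hom).
have [u fu] := f_onto [:: ga]; have [v fv] := f_onto [:: gb].
apply: (syl_noncommute (prime_gt1 hp)).
have := Gp_hom_image_commute hodd (ltn0Sn q) F_peq F_cat u v.
by rewrite /F (eval_word_peq ab_rel fu) (eval_word_peq ab_rel fv) !eval_word_seq1.
Qed.
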